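(* Let $Y$ and $X_1,\ldots,X_m$ be real-valued square integrable random variables on a common probability space, write $\mathbf{X}=(X_1,\ldots,X_m)$, and fix $k\in\{1,\ldots,m\}$. Then $\iota_{X_k\mid X_j,\,j\neq k}(Y)=0$ if and only if $E(Y\mid \mathbf{X})=\theta_0+\sum_{j\neq k}\theta_j X_j$ (almost surely) for some real constants $\theta_0$ and $\theta_j$, $j\neq k$.
   Context: Define the set of distributional disturbances $$\mathcal{H}_k=\{\delta(\mathbf{X})\in L^2:\ \delta:\mathbb{R}^m\to\mathbb{R}\text{ measurable},\ E[\delta(\mathbf{X})]=0,\ E[\delta^2(\mathbf{X})]=1,\ E[X_j\delta(\mathbf{X})]=0\text{ for all } j\neq k\}$$ and the partial mean impact of $X_k$ on $Y$, $$\iota_{X_k\mid X_j,\,j\neq k}(Y)=\sup_{\delta(\mathbf{X})\in\mathcal{H}_k}E[Y\delta(\mathbf{X})].$$ *)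

From HB Require Import structures.
From mathcomp Require Import all_boot all_order all_algebra.
From mathcomp Require Import all_classical all_reals all_analysis.
Set Implicit Arguments. Unset Strict Implicit. Unset Printing Implicit Defensive.
Import Order.TTheory GRing.Theory Num.Theory.
Local Open Scope classical_set_scope.
Local Open Scope ring_scope.
Local Open Scope ereal_scope.

Section defs.
Context (R : realType) (d : measure_display) (T : measurableType d)
  (P : probability T R) (m : nat).

(* H_k : delta(X) with delta : R^m -> R measurable, E[delta(X)] = 0,
   E[delta(X)^2] = 1, E[X_j delta(X)] = 0 for all j <> k.
   (Integrability conditions make the expectations meaningful; they are
   implied by square integrability.) *)
Definition in_Hk (X : T -> m.-tuple R) (k : 'I_m) (delta : m.-tuple R -> R)
  : Prop :=
  [/\ measurable_fun [set: m.-tuple R] delta,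
      P.-integrable [set: T] (fun x => (delta (X x))%:E),
      \int[P]_x (delta (X x))%:E = 0,
      \int[P]_x ((delta (X x)) ^+ 2)%:E = 1
    & forall j : 'I_m, j != k ->
        P.-integrable [set: T] (fun x => (tnth (X x) j * delta (X x))%:E) /\
        \int[P]_x (tnth (X x) j * delta (X x))%:E = 0].

(* partial mean impact iota_{X_k | X_j, j<>k}(Y) = sup_{delta in H_k} E[Y delta(X)],
   with the convention sup of the empty family = 0 *)
Definition partial_mean_impact (Y : T -> R) (X : T -> m.-tuple R) (k : 'I_m)
  : \bar R :=
  if `[< exists delta, in_Hk X k delta >] then
    ereal_sup [set \int[P]_x (Y x * delta (X x))%:E | delta in in_Hk X k]
  else 0.

Definition sigmaX_measurable (X : T -> m.-tuple R) (Z : T -> R) : Prop :=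
  forall B : set R, measurable B ->
    exists A : set (m.-tuple R), measurable A /\ Z @^-1` B = X @^-1` A.

Definition is_cond_exp (Y : T -> R) (X : T -> m.-tuple R) (Z : T -> R) : Prop :=
  [/\ sigmaX_measurable X Z,
      P.-integrable [set: T] (fun x => (Z x)%:E)
    & forall A : set (m.-tuple R), measurable A ->
        \int[P]_(x in X @^-1` A) (Y x)%:E = \int[P]_(x in X @^-1` A) (Z x)%:E].

End defs.

From HB Require Import structures.
From mathcomp Require Import all_boot all_order all_algebra.
From mathcomp Require Import all_classical all_reals all_analysis.
From mathcomp Require Import measurable_realfun ring lra.
Set Implicit Arguments.
Unset Strict Implicit.
Import Order.TTheory GRing.Theory Num.Theory.
Local Open Scope classical_set_scope.
Local Open Scope ring_scope.

(* Work in L^2(P). Let S be the span of 1 and the X_j, j <> k, and Y_S the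
   orthogonal projection of Y on S, obtained by Gram-Schmidt. Up to
   normalization, H_k consists of the nonzero sigma(X)-measurable elements of
   L^2 orthogonal to S, and it is symmetric under delta |-> -delta, so the
   partial mean impact vanishes iff Y is orthogonal to all of them. In that
   case, for every event {X in A}, the indicator 1_A(X) is its projection on S
   plus such an element, whence E[Y 1_A(X)] = E[Y_S 1_A(X)], i.e.
   Y_S = E(Y|X). Conversely, if E(Y|X) lies in S, then Y - E(Y|X) is
   orthogonal to every sigma(X)-measurable L^2 variable, and E(Y|X) is
   orthogonal to H_k. *)

Lemma funrposBnegE (aT : Type) (R : realDomainType) (f : aT -> R) x :
  f^\+ x - f^\- x = f x.
Proof. exact: (congr1 (fun h => h x) (funrposBneg f)). Qed.

Section square_integrable.
Context (R : realType) (d : measure_display) (T : measurableType d)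
  (P : probability T R).

Definition L2 (f : T -> R) := measurable_fun [set: T] f /\
  P.-integrable [set: T] (fun x => (f x ^+ 2)%:E).

(* [fine] maps an infinite integral to [0]; it is only applied to products of
   [L2] functions, whose integrals are finite. *)
Definition inner (f g : T -> R) : R := fine (\int[P]_x (f x * g x)%:E).

Lemma L2_integrable_mul f g : L2 f -> L2 g ->
  P.-integrable [set: T] (fun x => (f x * g x)%:E).
Proof.
move=> [mf If] [mg Ig].
apply: (@le_integrable _ _ _ _ _ measurableT _
   (fun x => (f x ^+ 2)%:E + (g x ^+ 2)%:E)%E).
- by apply/measurable_EFinP; exact: measurable_funM.
- move=> x _; rewrite -EFinD !abse_EFin lee_fin normrM.
  rewrite (@ger0_norm _ (_ + _)) ?addr_ge0 ?sqr_ge0 //.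
  rewrite -(real_normK (num_real (f x))) -(real_normK (num_real (g x))).
  have := sqr_ge0 (`|f x| - `|g x|); have := normr_ge0 (f x);
    have := normr_ge0 (g x); nra.
- exact: integrableD.
Qed.

Lemma L2_cst c : L2 (fun=> c).
Proof.
split; first exact: measurable_cst.
exact: (finite_measure_integrable_cst P (c ^+ 2) measurableT).
Qed.

Lemma L2_integrable f : L2 f -> P.-integrable [set: T] (fun x => (f x)%:E).
Proof.
move=> Lf; have := L2_integrable_mul Lf (L2_cst 1).
by under eq_fun do rewrite mulr1.
Qed.

Lemma L2D f g : L2 f -> L2 g -> L2 (fun x => f x + g x).
Proof.
move=> Lf Lg; have [mf If] := Lf; have [mg Ig] := Lg.
split; first exact: measurable_funD.
have Ifg := L2_integrable_mul Lf Lg.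
rewrite (_ : (fun x => _) = (fun x =>
    (f x ^+ 2)%:E + (2%:E * (f x * g x)%:E + (g x ^+ 2)%:E)))%E; last first.
  by apply/funext => x; rewrite -EFinM -!EFinD sqrrD; congr (_%:E); ring.
by apply: integrableD => //; apply: integrableD => //; exact: integrableZl.
Qed.

Lemma L2Z a f : L2 f -> L2 (fun x => a * f x).
Proof.
move=> [mf If]; split; first exact: measurable_funM (measurable_cst _) mf.
rewrite (_ : (fun x => _) = (fun x => (a ^+ 2)%:E * (f x ^+ 2)%:E))%E; last first.
  by apply/funext => x; rewrite -EFinM exprMn.
exact: integrableZl.
Qed.

Lemma L2N f : L2 f -> L2 (fun x => - f x).
Proof. by move=> /(L2Z (-1)); under eq_fun do rewrite mulN1r. Qed.

Lemma L2B f g : L2 f -> L2 g -> L2 (fun x => f x - g x).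
Proof. by move=> Lf Lg; apply: L2D => //; exact: L2N. Qed.

Lemma L2_sum (I : Type) (s : seq I) (F : I -> T -> R) :
  (forall i, L2 (F i)) -> L2 (fun x => \sum_(i <- s) F i x).
Proof.
move=> LF; elim: s => [|i s IH].
  by under eq_fun do rewrite big_nil; exact: L2_cst.
by under eq_fun do rewrite big_cons; exact: L2D.
Qed.

Lemma L2_funrpos f : L2 f -> L2 f^\+.
Proof.
move=> [mf If]; split; first exact: measurable_funrpos.
apply: (@le_integrable _ _ _ _ _ measurableT _ (fun x => (f x ^+ 2)%:E)) => //.
  by apply/measurable_EFinP; apply: measurable_funX; exact: measurable_funrpos.
move=> x _; rewrite !abse_EFin lee_fin !ger0_norm ?sqr_ge0 // /funrpos.
by case: (lerP 0 (f x)) => // _; rewrite expr0n /= sqr_ge0.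
Qed.

Lemma L2_funrneg f : L2 f -> L2 f^\-.
Proof. by move=> /L2N /L2_funrpos; rewrite -funrposN. Qed.

Lemma innerE f g : L2 f -> L2 g -> (\int[P]_x (f x * g x)%:E)%E = (inner f g)%:E.
Proof.
by move=> Lf Lg; rewrite /inner fineK // integrable_fin_num //; exact: L2_integrable_mul.
Qed.

Lemma innerC f g : inner f g = inner g f.
Proof. by rewrite /inner; congr fine; apply: eq_integral => x _; rewrite mulrC. Qed.

Lemma innerDl f g h : L2 f -> L2 g -> L2 h ->
  inner (fun x => f x + g x) h = inner f h + inner g h.
Proof.
move=> Lf Lg Lh; have Ifh := L2_integrable_mul Lf Lh.
have Igh := L2_integrable_mul Lg Lh.
rewrite /inner; under eq_integral do rewrite mulrDl EFinD.
by rewrite integralD // fineD // integrable_fin_num.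
Qed.

Lemma innerZl a f h : L2 f -> L2 h -> inner (fun x => a * f x) h = a * inner f h.
Proof.
move=> Lf Lh; rewrite /inner.
under eq_integral do rewrite -mulrA EFinM.
rewrite integralZl ?(innerE Lf Lh) //; exact: L2_integrable_mul.
Qed.

Lemma innerNl f h : L2 f -> L2 h -> inner (fun x => - f x) h = - inner f h.
Proof.
move=> Lf Lh; under eq_fun do rewrite -mulN1r.
by rewrite innerZl // mulN1r.
Qed.

Lemma innerBl f g h : L2 f -> L2 g -> L2 h ->
  inner (fun x => f x - g x) h = inner f h - inner g h.
Proof. by move=> Lf Lg Lh; rewrite innerDl ?innerNl //; exact: L2N. Qed.

Lemma inner_suml (I : Type) (s : seq I) (F : I -> T -> R) h :
  (forall i, L2 (F i)) -> L2 h ->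
  inner (fun x => \sum_(i <- s) F i x) h = \sum_(i <- s) inner (F i) h.
Proof.
move=> LF Lh; elim: s => [|i s IH].
  rewrite big_nil /inner; under eq_integral do rewrite big_nil mul0r.
  by rewrite integral0.
under eq_fun do rewrite big_cons.
by rewrite innerDl ?big_cons ?IH //; exact: L2_sum.
Qed.

Lemma inner_cst c h : L2 h -> inner (fun=> c) h = c * inner (fun=> 1) h.
Proof.
move=> Lh; rewrite -innerZl //; last exact: L2_cst.
by congr (inner _ _); apply/funext => x; rewrite mulr1.
Qed.

Lemma inner11 : inner (fun=> 1) (fun=> 1) = 1.
Proof.
rewrite /inner; under eq_integral do rewrite mulr1.
rewrite integral_cst // mul1e.
by apply: (@eq_trans _ _ (fine 1%E)) => //; congr fine; exact: probability_setT.
Qed.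

Lemma inner_ge0 f : 0 <= inner f f.
Proof.
rewrite /inner; apply: fine_ge0; apply: integral_ge0 => x _.
by rewrite lee_fin -expr2 sqr_ge0.
Qed.

(* As [inner g g = 0], [inner (f + t g) (f + t g)] is affine in [t]; it can
   only stay nonnegative if its slope [2 inner f g] vanishes. *)
Lemma inner_null f g : L2 f -> L2 g -> inner g g = 0 -> inner f g = 0.
Proof.
move=> Lf Lg gg0.
have inner_affine_ge0 t : 0 <= inner f f + 2 * t * inner f g.
  have LtG := L2Z t Lg; have LftG := L2D Lf LtG.
  have := inner_ge0 (fun x => f x + t * g x).
  rewrite innerDl // (innerC f) (innerC (fun x => t * g x)) !innerDl //.
  rewrite (innerC f (fun x => t * g x)) !innerZl // (innerC g (fun x => t * g x)).
  rewrite innerZl // gg0 (innerC g f).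
  set a := inner f f; set b := inner f g; nra.
apply/eqP/negPn/negP => fg0.
have := inner_affine_ge0 (- (inner f f + 1) / (2 * inner f g)).
set a := inner f f; set b := inner f g.
have -> : a + 2 * (- (a + 1) / (2 * b)) * b = -1 by field.
by rewrite ler0N1.
Qed.

Section affine_projection.
Variables (m : nat) (F : 'I_m -> T -> R).
Hypothesis LF : forall i, L2 (F i).

Definition lincomb (c0 : R) (c : 'I_m -> R) (s : seq 'I_m) (x : T) :=
  c0 + \sum_(i <- s) c i * F i x.

Definition orth_span (s : seq 'I_m) (r : T -> R) :=
  inner r (fun=> 1) = 0 /\ forall i, i \in s -> inner r (F i) = 0.

Lemma lincomb_L2 c0 c s : L2 (lincomb c0 c s).
Proof.
apply: L2D; first exact: L2_cst.
by apply: (@L2_sum _ s (fun i x => c i * F i x)) => i; exact: L2Z.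
Qed.

Lemma inner_lincomb_orth r c0 c s : L2 r -> orth_span s r ->
  inner r (lincomb c0 c s) = 0.
Proof.
move=> Lr [r1 rF]; have LcF i : L2 (fun x => c i * F i x) by exact: L2Z.
have Lsum := L2_sum s LcF.
rewrite innerC /lincomb innerDl //; last exact: L2_cst.
rewrite inner_cst // innerC r1 mulr0 add0r inner_suml //.
rewrite big_seq big1 // => i si.
by rewrite innerZl // innerC rF // mulr0.
Qed.

Lemma lincomb_cons (j : 'I_m) s c0 c d0 dd a x : j \notin s ->
  lincomb (c0 - a * d0) (fun i => if i == j then a else c i - a * dd i) (j :: s) x
  = lincomb c0 c s x + a * (F j x - lincomb d0 dd s x).
Proof.
move=> js; rewrite /lincomb big_cons eqxx.
rewrite (@eq_big_seq _ _ _ _ s _ (fun i => c i * F i x - a * (dd i * F i x))).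
  rewrite big_split /= sumrN -mulr_sumr.
  set S := \sum_(i <- s) c i * F i x; set S' := \sum_(i <- s) dd i * F i x.
  ring.
move=> i si; have /negPf -> : i != j by apply: contraNneq js => <-.
by rewrite mulrBl mulrA.
Qed.

Lemma orth_span_cons j s r d0 dd (rb := fun x => F j x - lincomb d0 dd s x) :
  L2 r -> orth_span s r -> orth_span s rb ->
  orth_span (j :: s) (fun x => r x - inner r rb / inner rb rb * rb x).
Proof.
move=> Lr [r1 rF] [b1 bF].
have Lrb : L2 rb by apply: L2B => //; exact: lincomb_L2.
set a := inner r rb / inner rb rb.
have LaB : L2 (fun x => a * rb x) by exact: L2Z.
have Lres : L2 (fun x => r x - a * rb x) by exact: L2B.
have res1 : inner (fun x => r x - a * rb x) (fun=> 1) = 0.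
  by rewrite innerBl ?innerZl ?r1 ?b1 ?mulr0 ?subrr //; exact: L2_cst.
have resF i : i \in s -> inner (fun x => r x - a * rb x) (F i) = 0.
  by move=> si; rewrite innerBl ?innerZl ?rF ?bF ?mulr0 ?subrr.
have res_rb : inner (fun x => r x - a * rb x) rb = 0.
  rewrite innerBl ?innerZl //.
  have [rb0|rbn0] := eqVneq (inner rb rb) 0.
    by rewrite rb0 mulr0 subr0 (inner_null Lr Lrb rb0).
  by rewrite /a mulfVK // subrr.
split=> // i; rewrite in_cons => /orP[/eqP ->|]; last exact: resF.
have -> : F j = fun x => rb x + lincomb d0 dd s x.
  by apply/funext => x; rewrite /rb subrK.
rewrite innerC innerDl //; last exact: lincomb_L2.
by rewrite [inner (lincomb _ _ _) _]innerC inner_lincomb_orth // addr0 innerC.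
Qed.

Lemma exists_orth_residual s : uniq s -> forall h, L2 h ->
  exists c0 c, orth_span s (fun x => h x - lincomb c0 c s x).
Proof.
elim: s => [_ h Lh|j s IH /= /andP[js us] h Lh].
  exists (inner h (fun=> 1)), (fun=> 0); split=> //.
  under eq_fun do rewrite /lincomb big_nil addr0.
  rewrite innerBl //; try exact: L2_cst.
  by rewrite inner_cst ?inner11 ?mulr1 ?subrr //; exact: L2_cst.
have [c0 [c Hh]] := IH us h Lh.
have [d0 [dd Hb]] := IH us (F j) (LF j).
have Lr : L2 (fun x => h x - lincomb c0 c s x) by apply: L2B => //; exact: lincomb_L2.
pose rb x := F j x - lincomb d0 dd s x.
pose a := inner (fun x => h x - lincomb c0 c s x) rb / inner rb rb.
exists (c0 - a * d0), (fun i => if i == j then a else c i - a * dd i).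
under eq_fun do rewrite lincomb_cons // opprD addrA.
exact: (orth_span_cons Lr Hh Hb).
Qed.

End affine_projection.

Section preimage_integrals.
Context (d' : measure_display) (U : measurableType d') (X : T -> U).
Hypothesis mX : measurable_fun [set: T] X.
Import HBNNSimple.

Lemma measurable_comp_preimage A : measurable A -> measurable (X @^-1` A).
Proof. by move=> mA; rewrite -[V in measurable V]setTI; exact: mX. Qed.

Lemma integral_mul_indic_comp (w : T -> R) (B : set U) :
  (\int[P]_x (w x * \1_B (X x))%:E = \int[P]_(x in X @^-1` B) (w x)%:E)%E.
Proof.
rewrite [RHS]integral_mkcond; apply: eq_integral => x _.
rewrite patchE indicE; have -> : (X x \in B) = (x \in X @^-1` B) by [].
by case: ifPn => _; rewrite ?mulr1 ?mulr0.
Qed.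

Lemma integral_mul_nnsfun_comp (w : T -> R) (h : {nnsfun U >-> R}) :
  measurable_fun [set: T] w -> (forall x, 0 <= w x) ->
  (\int[P]_x (w x * h (X x))%:E =
   \sum_(y \in range h) y%:E * \int[P]_(x in X @^-1` (h @^-1` [set y])) (w x)%:E)%E.
Proof.
move=> mw w0.
transitivity (\int[P]_x (\sum_(y \in range h)
    (w x * (y * \1_(h @^-1` [set y]) (X x)))%:E))%E.
  apply: eq_integral => x _; rewrite fsumEFin; last exact: fimfunP.
  by rewrite -mulr_fsumr -fimfunE.
rewrite ge0_integral_fsum //; last 2 first.
- move=> y; apply/measurable_EFinP; apply: measurable_funM => //.
  apply: measurable_funM; first exact: measurable_cst.
  by apply: measurableT_comp => //; exact: measurable_indic.
- move=> y x _; rewrite lee_fin mulr_ge0 //.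
  by have := nnfun_muleindic_ge0 h y (X x); rewrite -EFinM lee_fin.
apply: eq_fsbigr => y; rewrite inE => -[t _ <-].
rewrite -integral_mul_indic_comp -ge0_integralZl_EFin //.
- by apply: eq_integral => x _; rewrite -EFinM; congr EFin; ring.
- by move=> x _; rewrite lee_fin mulr_ge0 // indicE.
- by apply/measurable_EFinP; apply: measurable_funM => //; exact: measurableT_comp.
Qed.

(* Approximate [G] from below by simple functions, for which the claim is a
   finite combination of integrals over preimages, and pass to the limit by
   monotone convergence. *)
Lemma eq_integral_mul_comp_ge0 (w1 w2 : T -> R) (G : U -> R) :
  measurable_fun [set: T] w1 -> measurable_fun [set: T] w2 ->
  (forall x, 0 <= w1 x) -> (forall x, 0 <= w2 x) ->
  (forall A, measurable A ->
    (\int[P]_(x in X @^-1` A) (w1 x)%:E = \int[P]_(x in X @^-1` A) (w2 x)%:E)%E) ->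
  measurable_fun [set: U] G -> (forall t, 0 <= G t) ->
  (\int[P]_x (w1 x * G (X x))%:E = \int[P]_x (w2 x * G (X x))%:E)%E.
Proof.
move=> mw1 mw2 w10 w20 w12 mG G0.
have mEG : measurable_fun [set: U] (EFin \o G) by exact/measurable_EFinP.
pose h_ := nnsfun_approx measurableT mEG.
have integral_lim (w : T -> R) : measurable_fun [set: T] w -> (forall x, 0 <= w x) ->
    (\int[P]_x (w x * G (X x))%:E =
     limn (fun n => \int[P]_x (w x * h_ n (X x))%:E))%E.
  move=> mw w0.
  transitivity (\int[P]_x limn (fun n => (w x * h_ n (X x))%:E))%E.
    apply: eq_integral => x _; apply/esym/cvg_lim => //.
    have wx_fin : (w x)%:E \is a fin_num by [].
    have := cvgeZl wx_fin
      (cvg_nnsfun_approx measurableT mEG (fun t _ => G0 t) (I : setT (X x))).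
    rewrite /= -EFinM; apply: cvg_trans; apply: near_eq_cvg.
    by apply: nearW => n; rewrite /= EFinM.
  apply: monotone_convergence => //.
  - move=> n; apply/measurable_EFinP; apply: measurable_funM => //.
    by apply: measurableT_comp => //; exact: measurable_funPT.
  - by move=> n x _; rewrite lee_fin mulr_ge0.
  - move=> x _ a b ab; rewrite lee_fin ler_wpM2l //.
    exact/lefP/nd_nnsfun_approx.
rewrite (integral_lim w1) // (integral_lim w2) //; congr (limn _); apply/funext => n.
by rewrite !integral_mul_nnsfun_comp //; apply: eq_fsbigr => y _; rewrite w12.
Qed.

Lemma L2_indic_comp A : measurable A -> L2 (fun x => \1_A (X x)).
Proof.
move=> mA; have m1A : measurable_fun [set: T] (fun x => \1_A (X x) : R).
  by apply: measurableT_comp mX; exact: measurable_indic.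
split=> //; apply: (@le_integrable _ _ _ _ _ measurableT _ (fun=> 1%:E)).
- by apply/measurable_EFinP; exact: measurable_funX.
- move=> x _; rewrite lee_fin indicE normr1.
  by case: (_ \in _); rewrite ?expr1n ?expr0n ?normr1 ?normr0.
- exact: finite_measure_integrable_cst.
Qed.

Lemma preimage_integral_funrpos_neg (W : T -> R) : L2 W ->
  (forall A, measurable A -> (\int[P]_(x in X @^-1` A) (W x)%:E)%E = 0%E) ->
  forall A, measurable A ->
  (\int[P]_(x in X @^-1` A) (W^\+ x)%:E = \int[P]_(x in X @^-1` A) (W^\- x)%:E)%E.
Proof.
move=> LW W0 A mA; have mXA := measurable_comp_preimage mA.
have Ipos : P.-integrable (X @^-1` A) (fun x => (W^\+ x)%:E).
  exact: integrableS measurableT mXA (subsetT _) (L2_integrable (L2_funrpos LW)).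
have Ineg : P.-integrable (X @^-1` A) (fun x => (W^\- x)%:E).
  exact: integrableS measurableT mXA (subsetT _) (L2_integrable (L2_funrneg LW)).
have := W0 A mA; under eq_integral do rewrite -funrposBnegE EFinB.
rewrite integralB // -(fineK (integrable_fin_num mXA Ipos)).
rewrite -(fineK (integrable_fin_num mXA Ineg)) -EFinB => -[/eqP].
by rewrite subr_eq0 => /eqP ->.
Qed.

(* Split [W] and [g] into positive and negative parts: each of the four
   products then falls under [eq_integral_mul_comp_ge0]. *)
Lemma inner_comp_eq0 (W : T -> R) (g : U -> R) : L2 W -> measurable_fun [set: U] g ->
  L2 (fun x => g (X x)) ->
  (forall A, measurable A -> (\int[P]_(x in X @^-1` A) (W x)%:E)%E = 0%E) ->
  inner W (fun x => g (X x)) = 0.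
Proof.
move=> LW mg LgX W0.
have W_eq := preimage_integral_funrpos_neg LW W0.
have LWp := L2_funrpos LW; have LWn := L2_funrneg LW.
have LgpX : L2 (fun x => g^\+ (X x)) by exact: L2_funrpos LgX.
have LgnX : L2 (fun x => g^\- (X x)) by exact: L2_funrneg LgX.
have [mWp _] := LWp; have [mWn _] := LWn.
have inner_eq (G : U -> R) : measurable_fun [set: U] G -> (forall t, 0 <= G t) ->
    inner W^\+ (fun x => G (X x)) = inner W^\- (fun x => G (X x)).
  by move=> mG G0; rewrite /inner; congr fine; exact: eq_integral_mul_comp_ge0.
have -> : W = fun x => W^\+ x - W^\- x.
  by apply/funext => x; rewrite funrposBnegE.
have -> : (fun x => g (X x)) = fun x => g^\+ (X x) - g^\- (X x).
  by apply/funext => x; rewrite funrposBnegE.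
have LgpnX := L2B LgpX LgnX.
rewrite innerBl // (innerC W^\+) (innerC W^\-) !innerBl //.
rewrite !(innerC (fun x => g^\+ (X x))) !(innerC (fun x => g^\- (X x))).
rewrite !inner_eq //; try exact: measurable_funrpos; try exact: measurable_funrneg.
by rewrite subrr.
Qed.

End preimage_integrals.

Section partial_mean_impact.
Context (m : nat) (X : T -> m.-tuple R) (k : 'I_m).
Hypothesis mX : measurable_fun [set: T] X.

Let Xj (i : 'I_m) (x : T) := tnth (X x) i.
Hypothesis LX : forall i, L2 (Xj i).

Let others := [seq j <- index_enum 'I_m | j != k].

Lemma uniq_others : uniq others.
Proof. by rewrite filter_uniq // index_enum_uniq. Qed.

Lemma mem_others i : (i \in others) = (i != k).
Proof. by rewrite mem_filter mem_index_enum andbT. Qed.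

Lemma big_others (f : 'I_m -> R) :
  \sum_(i <- others) f i = \sum_(j < m | j != k) f j.
Proof. by rewrite big_filter. Qed.

Lemma sigmaX_measurable_comp (f : m.-tuple R -> R) :
  measurable_fun [set: m.-tuple R] f -> sigmaX_measurable X (fun x => f (X x)).
Proof.
move=> mf B mB; exists (f @^-1` B); split=> //.
by rewrite -[V in measurable V]setTI; exact: mf.
Qed.

Lemma measurable_tuple_lincomb (c0 : R) (c : 'I_m -> R) (s : seq 'I_m) :
  measurable_fun [set: m.-tuple R]
    (fun t : m.-tuple R => c0 + \sum_(i <- s) c i * tnth t i).
Proof.
apply: measurable_funD; first exact: measurable_cst.
apply: measurable_sum => i; apply: measurable_funM; first exact: measurable_cst.
exact: measurable_tnth.
Qed.

Lemma in_Hk_innerP (delta : m.-tuple R -> R) :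
  in_Hk P X k delta <->
  [/\ measurable_fun [set: m.-tuple R] delta, L2 (fun x => delta (X x)),
      orth_span Xj others (fun x => delta (X x))
    & inner (fun x => delta (X x)) (fun x => delta (X x)) = 1].
Proof.
split.
- case=> mdel _ e0 e1 hj.
  have mdX : measurable_fun [set: T] (fun x => delta (X x)).
    exact: measurableT_comp mdel mX.
  have LdX : L2 (fun x => delta (X x)).
    split=> //; apply/integrableP; split.
      by apply/measurable_EFinP; exact: measurable_funX.
    under eq_integral do rewrite abse_EFin ger0_norm ?sqr_ge0 //.
    by rewrite e1 ltry.
  split=> //; last by rewrite /inner; under eq_integral do rewrite -expr2; rewrite e1.
  split; first by rewrite /inner; under eq_integral do rewrite mulr1; rewrite e0.
  move=> i; rewrite mem_others => ik.
  by rewrite innerC /inner /Xj; have [_ ->] := hj i ik.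
- case=> mdel LdX [e0 hj] e1; split=> //.
  + exact: L2_integrable.
  + under eq_integral do rewrite -[delta _]mulr1.
    by rewrite (innerE LdX (L2_cst 1)) e0.
  + under eq_integral do rewrite expr2.
    by rewrite (innerE LdX LdX) e1.
  + move=> j jk; split; first exact: L2_integrable_mul (LX j) LdX.
    by rewrite (innerE (LX j) LdX) innerC hj // mem_others.
Qed.

Definition orth_Hk (Y : T -> R) :=
  forall delta, in_Hk P X k delta -> inner Y (fun x => delta (X x)) = 0.

(* [H_k] is symmetric under [delta |-> - delta], so a vanishing supremum
   forces [E[Y delta(X)] = 0] on all of [H_k]. *)
Lemma orth_Hk_of_mean_impact0 Y : L2 Y ->
  partial_mean_impact P Y X k = 0%E -> orth_Hk Y.
Proof.
move=> LY iota0 delta Hdelta.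
have /in_Hk_innerP[mdel LdX [e0 hj] e1] := Hdelta.
move: iota0; rewrite /partial_mean_impact asboolT; last by exists delta.
move=> sup0; have LNdX := L2N LdX.
have HNdelta : in_Hk P X k (fun t => - delta t).
  apply/in_Hk_innerP; split=> //; first exact: measurable_funN.
    split; first by rewrite innerNl ?e0 ?oppr0 //; exact: L2_cst.
    by move=> j jk; rewrite innerNl ?hj ?oppr0.
  by rewrite innerNl // innerC innerNl // opprK.
have le_sup (f : m.-tuple R -> R) : in_Hk P X k f ->
    (\int[P]_x (Y x * f (X x))%:E <= 0)%E.
  by move=> Hf; rewrite -sup0; apply: ereal_sup_ubound; exists f.
have := le_sup _ Hdelta; have := le_sup _ HNdelta.
rewrite (innerE LY LdX) (innerE LY LNdX) !lee_fin innerC innerNl // innerC.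
lra.
Qed.

Lemma mean_impact0_of_orth_Hk Y : L2 Y -> orth_Hk Y ->
  partial_mean_impact P Y X k = 0%E.
Proof.
move=> LY YH; rewrite /partial_mean_impact; case: asboolP => // -[delta0 H0].
have intY0 delta : in_Hk P X k delta ->
    (\int[P]_x (Y x * delta (X x))%:E = 0)%E.
  move=> Hdelta; have /in_Hk_innerP[_ LdX _ _] := Hdelta.
  by rewrite (innerE LY LdX) YH.
rewrite (_ : [set _ | _ in _] = [set 0%E]) ?ereal_sup1 //.
apply/seteqP; split=> [_ [delta Hdelta <-]|_ ->]; first by rewrite /= intY0.
by exists delta0 => //; exact: intY0.
Qed.

(* A nonzero [sigma(X)]-measurable residual normalizes to an element of [H_k]. *)
Lemma orth_Hk_inner_comp Y (g : m.-tuple R -> R) : L2 Y -> orth_Hk Y ->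
  measurable_fun [set: m.-tuple R] g -> L2 (fun x => g (X x)) ->
  orth_span Xj others (fun x => g (X x)) -> inner Y (fun x => g (X x)) = 0.
Proof.
move=> LY YH mg LgX [g1 gF]; set rho := fun x => g (X x).
have [rr0|rrn0] := eqVneq (inner rho rho) 0; first exact: inner_null.
set sg := Num.sqrt (inner rho rho).
have sg_gt0 : 0 < sg by rewrite sqrtr_gt0 lt_neqAle eq_sym rrn0 inner_ge0.
have Hdelta : in_Hk P X k (fun t => sg^-1 * g t).
  apply/in_Hk_innerP; split.
  - exact: measurable_funM (measurable_cst _) mg.
  - exact: L2Z.
  - split; first by rewrite innerZl ?g1 ?mulr0 //; exact: L2_cst.
    by move=> i si; rewrite innerZl ?gF ?mulr0.
  - have LgX' := L2Z sg^-1 LgX.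
    rewrite innerZl // innerC innerZl //.
    rewrite -[inner rho rho](@sqr_sqrtr _ (inner rho rho)) ?inner_ge0 // -/sg.
    by field; exact: lt0r_neq0.
have /eqP := YH _ Hdelta; rewrite innerC innerZl // innerC.
by rewrite mulf_eq0 invr_eq0 gt_eqF //= => /eqP.
Qed.

Lemma orth_Hk_inner_comp_proj Y c0 c (g : m.-tuple R -> R) : L2 Y -> orth_Hk Y ->
  orth_span Xj others (fun x => Y x - lincomb Xj c0 c others x) ->
  measurable_fun [set: m.-tuple R] g -> L2 (fun x => g (X x)) ->
  inner Y (fun x => g (X x)) = inner (lincomb Xj c0 c others) (fun x => g (X x)).
Proof.
move=> LY YH Yres mg LgX.
have LZ := lincomb_L2 LX c0 c others.
have [d0 [dd gres]] := exists_orth_residual LX uniq_others LgX.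
set rho := fun x => g (X x) - lincomb Xj d0 dd others x in gres.
have Lrho : L2 rho by apply: L2B => //; exact: lincomb_L2.
have Yrho : inner Y rho = 0.
  apply: (orth_Hk_inner_comp (g := fun t => g t -
    (d0 + \sum_(i <- others) dd i * tnth t i))) => //.
  by apply: measurable_funB => //; exact: measurable_tuple_lincomb.
have Lg' := lincomb_L2 LX d0 dd others.
have -> : (fun x => g (X x)) = fun x => rho x + lincomb Xj d0 dd others x.
  by apply/funext => x; rewrite /rho subrK.
rewrite (innerC Y) (innerC (lincomb _ _ _ _)).
rewrite (innerDl Lrho Lg' LY) (innerDl Lrho Lg' LZ).
rewrite [inner rho Y]innerC Yrho inner_lincomb_orth // !add0r.
have := inner_lincomb_orth LX d0 dd (L2B LY LZ) Yres.
by rewrite innerBl // => /eqP; rewrite subr_eq0 innerC => /eqP ->; rewrite innerC.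
Qed.

Lemma cond_exp_of_orth_Hk Y : L2 Y -> orth_Hk Y ->
  exists (theta0 : R) (theta : 'I_m -> R),
    is_cond_exp P Y X (fun x => theta0 + \sum_(j < m | j != k) theta j * tnth (X x) j).
Proof.
move=> LY YH; have [t0 [th Yres]] := exists_orth_residual LX uniq_others LY.
exists t0, th.
have -> : (fun x => t0 + \sum_(j < m | j != k) th j * tnth (X x) j) =
    lincomb Xj t0 th others by apply/funext => x; rewrite /lincomb big_others.
split.
- exact: sigmaX_measurable_comp (measurable_tuple_lincomb t0 th others).
- exact/L2_integrable/lincomb_L2.
- move=> A mA; rewrite -!integral_mul_indic_comp.
  have L1A := L2_indic_comp mX mA.
  rewrite (innerE LY L1A) (innerE (lincomb_L2 LX t0 th others) L1A).
  by congr EFin; apply: orth_Hk_inner_comp_proj.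
Qed.

Lemma orth_Hk_of_cond_exp Y theta0 theta : L2 Y ->
  is_cond_exp P Y X (fun x => theta0 + \sum_(j < m | j != k) theta j * tnth (X x) j) ->
  orth_Hk Y.
Proof.
move=> LY; have -> : (fun x => theta0 + \sum_(j < m | j != k) theta j * tnth (X x) j)
    = lincomb Xj theta0 theta others by apply/funext => x; rewrite /lincomb big_others.
move=> [_ _ YZ] delta Hdelta; have /in_Hk_innerP[mdel LdX dX_orth _] := Hdelta.
have LZ := lincomb_L2 LX theta0 theta others.
have LW := L2B LY LZ.
have -> : Y = fun x => (Y x - lincomb Xj theta0 theta others x) + lincomb Xj theta0 theta others x.
  by apply/funext => x; rewrite subrK.
rewrite innerDl // (innerC (lincomb _ _ _ _)) inner_lincomb_orth // addr0.
apply: (inner_comp_eq0 mX) => // B mB; have mXB := measurable_comp_preimage mX mB.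
have IY := integrableS measurableT mXB (subsetT _) (L2_integrable LY).
have IZ := integrableS measurableT mXB (subsetT _) (L2_integrable LZ).
under eq_integral do rewrite EFinB.
by rewrite integralB // YZ // subee // integrable_fin_num.
Qed.

End partial_mean_impact.

End square_integrable.

Theorem theorem2 (R : realType) (d : measure_display) (T : measurableType d)
  (P : probability T R) (m : nat) (Y : T -> R) (X : T -> m.-tuple R)
  (k : 'I_m) :
  measurable_fun [set: T] Y ->
  P.-integrable [set: T] (fun x => (Y x ^+ 2)%:E) ->
  measurable_fun [set: T] X ->
  (forall j : 'I_m, P.-integrable [set: T] (fun x => (tnth (X x) j ^+ 2)%:E)) ->
  (partial_mean_impact P Y X k = 0%E <->
   exists (theta0 : R) (theta : 'I_m -> R),
     is_cond_exp P Y X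
       (fun x => theta0 + \sum_(j < m | j != k) theta j * tnth (X x) j)).
Proof.
move=> mY IY mX IX; have LY : L2 P Y by [].
have LX j : L2 P (fun x => tnth (X x) j).
  by split=> //; exact: measurableT_comp (measurable_tnth j) mX.
split=> [/(orth_Hk_of_mean_impact0 mX LX LY) | [theta0 [theta /orth_Hk_of_cond_exp]]].
- exact: cond_exp_of_orth_Hk.
- by move=> /(_ mX LX LY); exact: mean_impact0_of_orth_Hk.
Qed.
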